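(* Under the model assumptions in the context, suppose the distribution of $\mathbf W$ is $p_{\mathbf W}(\cdot;\boldsymbol\psi^* )$ where $\boldsymbol\psi^*\in\Theta_{\boldsymbol\psi}$ satisfies $\pi^1<\dots<\pi^J$ and conditions ID$(k)$ for some integer $k\ge1$ with $T_0\ge k+1$, $T\ge 2(k+1)$. Then for each $t\ge T_0+1$ the ATT $\boldsymbol\mu^{\mathrm{ATT}}_t=\mathbb{E}[\mathbf X_t(1)-\mathbf X_t(0)\mid D=1]=\sum_{j=1}^J\Pr(Z=j\mid D=1)\boldsymbol\mu^{\mathrm{ATT},j}_t$ is uniquely determined by the pmf $\{p_{\mathbf W}(\mathbf w;\boldsymbol\psi^* ):\mathbf w\in\mathcal X^T\times\{0,1\}\}$.
   Context: Fix integers $K\ge2$, $J\ge1$, $T_0\ge1$, $T>T_0$, $\mathcal X=\{x\in\{0,1\}^K:\sum_k x^{(k)}=1\}$. A unit has latent type $Z\in\{1,\dots,J\}$, treatment indicator $D\in\{0,1\}$ (treated units untreated in periods $\le T_0$, treated afterwards), potential outcomes $\mathbf X_t(0),\mathbf X_t(1)\in\mathcal X$; observed $\mathbf X_t=\mathbf X_t(0)$ for $t\le T_0$, $\mathbf X_t=D\mathbf X_t(1)+(1-D)\mathbf X_t(0)$ for $t>T_0$, $\mathbf W=(\mathbf X_1,\dots,\mathbf X_T,D)$, $\mathbf X_1^{T_0}=(\mathbf X_1,\dots,\mathbf X_{T_0})$. LTATT: $\boldsymbol\mu^{\mathrm{ATT},j}_t=\mathbb{E}[\mathbf X_t(1)-\mathbf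 X_t(0)\mid D=1,Z=j]$. Model assumptions: no anticipation ($\mathbf X_t(1)=\mathbf X_t(0)$, $t\le T_0$); for $t\ge T_0+1$ and all $\mathbf x_t,\mathbf x_1^{T_0},j$: $\Pr(\mathbf X_t(0)=\mathbf x_t\mid\mathbf X_1^{T_0}=\mathbf x_1^{T_0},D=0,Z=j)=\Pr(\mathbf X_t(0)=\mathbf x_t\mid\mathbf X_1^{T_0}=\mathbf x_1^{T_0},D=1,Z=j)$; there is $\epsilon>0$ with $\epsilon\le\Pr(D=1\mid\mathbf X_1^{T_0}=\mathbf x_1^{T_0},Z=j)\le1-\epsilon$; for each $j,d$, conditional on $Z=j,D=d$, $\{\mathbf X_t(d)\}_{t=1}^T$ is a first-order (possibly non-stationary) Markov chain. $J$ is known. Parametrization: $\boldsymbol\psi=(\boldsymbol\pi,\boldsymbol\varphi^1,\dots,\boldsymbol\varphi^J)$, $\pi^j=\Pr(Z=j)$, $\boldsymbol\varphi^j$ consisting of $p^j_{\mathbf X_1(0),D}(x,d)=\Pr(\mathbf X_1(0)=x,D=d\mid Z=j)$, $p^j_{\mathbf X_t(0)|\mathbf X_{t-1}(0)}(x|x')=\Pr(\mathbf X_t(0)=x\mid\mathbf X_{t-1}(0)=x',Z=j)$ ($t=2,\dots,T$), $p^j_{\mathbf X_t(1)|\mathbf X_{t-1}(1)}(x|x')$ ($t=T_0+1,\dots,T$). $\Theta_{\boldsymbol\psi}$: $\sum_j\pi^j=1$, $\epsilon\le\pi^j\le1-\epsilon$. $p_{\mathbf W}(\mathbf w;\boldsymbol\psi)=\sum_j\pi^jp^j_{\mathbf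 W}(\mathbf w;\boldsymbol\varphi^j)$, where for $\mathbf w=(x_1,\dots,x_T,d)$: $p^j_{\mathbf W}=p^j_{\mathbf X_1(0),D}(x_1,0)\prod_{t=2}^Tp^j_{\mathbf X_t(0)|\mathbf X_{t-1}(0)}(x_t|x_{t-1})$ if $d=0$, and $p^j_{\mathbf X_1(0),D}(x_1,1)\prod_{t=2}^{T_0}p^j_{\mathbf X_t(0)|\mathbf X_{t-1}(0)}(x_t|x_{t-1})\prod_{t=T_0+1}^Tp^j_{\mathbf X_t(1)|\mathbf X_{t-1}(1)}(x_t|x_{t-1})$ if $d=1$. Conditions ID$(k)$: for $\xi_1=(x_1,\dots,x_k)\in\mathcal X^k$, $P^j_1(\xi_1,d)=p^j_{\mathbf X_1(0),D}(x_1,d)\prod_{t=2}^kp^j_{\mathbf X_t(0)|\mathbf X_{t-1}(0)}(x_t|x_{t-1})$, $\tau^j(\xi_1,d)=\pi^jP^j_1(\xi_1,d)/\sum_m\pi^mP^m_1(\xi_1,d)$; $q^j_{21}(\xi_2|\xi_1)=p^j_{\mathbf X_{k+1}(0)|\mathbf X_k(0)}(\xi_2|x_k)$; $q^j_{32}(\xi_3|\xi_2)=p^j_{\mathbf X_{k+2}(0)|\mathbf X_{k+1}(0)}(\xi_3|\xi_2)$; $q^j_{43}(\xi_4|\xi_3)=\prod_{t=k+3}^Tp^j_{\mathbf X_t(0)|\mathbf X_{t-1}(0)}(x_t|x_{t-1})$ for $\xi_4=(x_{k+3},\dots,x_T)$, $x_{k+2}=\xi_3$; $\lambda^j_1(\xi_2|\xi_1)=\tau^j(\xi_1,0)q^j_{21}(\xi_2|\xi_1)$.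 Given $a_1,\dots,a_J\in\mathcal X^k$, $b_1,\dots,b_{J-1}\in\mathcal X^{T-k-2}$: $\bar L_{\xi_2}=[\lambda^j_1(\xi_2|a_i)]_{i,j}$; $L_{\xi_3}$ has first row all ones and $(i+1,j)$ entry $q^j_{43}(b_i|\xi_3)$; $D_{\xi_3|\xi_2}=\mathrm{diag}_j(q^j_{32}(\xi_3|\xi_2))$. (a) There is $\xi_3^*\in\mathcal X$ such that for every $\xi_3\in\mathcal X$ there exist $\check\xi_2,\bar\xi_2,\bar\xi_3\in\mathcal X$, $a_i$, $b_i$ with (i) $\bar L_{\check\xi_2},\bar L_{\bar\xi_2},L_{\xi_3},L_{\xi_3^*},L_{\bar\xi_3}$ nonsingular, (ii) the diagonal entries of $D_{\xi_3|\check\xi_2}D_{\bar\xi_3|\check\xi_2}^{-1}D_{\bar\xi_3|\bar\xi_2}D_{\xi_3|\bar\xi_2}^{-1}$ pairwise distinct; (b) all $q^j_{32},q^j_{43}$ values positive; (c) for every $\xi_1$ there are $c_1,\dots,c_J\in\mathcal X$ with $[q^j_{21}(c_i|\xi_1)]_{i,j}$ nonsingular; (d) for every $\xi_2$ there are $e_1,\dots,e_J\in\mathcal X^k$ with $[\tau^j(e_i,1)q^j_{21}(\xi_2|e_i)]_{i,j}$ nonsingular. *)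

From HB Require Import structures.
From mathcomp Require Import all_boot all_order all_algebra.
From mathcomp Require Import reals.
Set Implicit Arguments. Unset Strict Implicit. Unset Printing Implicit Defensive.
Import Order.TTheory GRing.Theory Num.Theory.
Local Open Scope ring_scope.

(* The one-hot state space X = {x in {0,1}^K : sum x = 1} is identified with
   'I_K (state k <-> k-th unit vector); expectations of X_t are row vectors
   in 'rV[R]_K whose k-th entry is Pr(X_t = e_k | ...). *)

(* Parameter psi = (pi, phi^1, ..., phi^J).
   pi_ j          = pi^j = Pr(Z = j)
   pXD j x d      = p^j_{X_1(0),D}(x, d)
   p0 j t x x'    = p^j_{X_t(0)|X_{t-1}(0)}(x | x')   (relevant for 2 <= t <= T)
   p1 j t x x'    = p^j_{X_t(1)|X_{t-1}(1)}(x | x')   (relevant for T0+1 <= t <= T) *)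
Record param (R : realType) (K J : nat) := Param {
  pi_ : 'I_J -> R;
  pXD : 'I_J -> 'I_K -> bool -> R;
  p0  : 'I_J -> nat -> 'I_K -> 'I_K -> R;
  p1  : 'I_J -> nat -> 'I_K -> 'I_K -> R }.

Section Model.
Variables (R : realType) (K J : nat).
Local Notation st := 'I_K.
Local Notation par := (param R K J).

(* Probability of a (finite) Markov path x, where index s : 'I_n of x is
   period s + off, [init] gives the probability of the first state and
   [tr t y y'] the transition probability to y at period t from y'. *)
Definition chain_prob {n : nat} (off : nat) (init : st -> R)
    (tr : nat -> st -> st -> R) (x : {ffun 'I_n -> st}) : R :=
  (\prod_(s < n | (s : nat) == 0%N) init (x s)) *
  \prod_(s < n) \prod_(r < n | (r : nat).+1 == s) tr (s + off)%N (x s) (x r).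

Definition tr_treated (T0 : nat) (psi : par) (j : 'I_J) (t : nat) :=
  if (t <= T0)%N then p0 psi j t else p1 psi j t.

(* p_W(w; psi), w = (x_1, ..., x_T, d); x s is x_{s+1}. *)
Definition pW (T0 T : nat) (psi : par) (x : {ffun 'I_T -> st}) (d : bool) : R :=
  \sum_(j < J) pi_ psi j *
    (if d then chain_prob 1 (fun x1 => pXD psi j x1 true) (tr_treated T0 psi j) x
     else chain_prob 1 (fun x1 => pXD psi j x1 false) (p0 psi j) x).

Definition stateAt (T : nat) (x : {ffun 'I_T -> st}) (t : nat) (k0 : st) : R :=
  ([exists s : 'I_T, ((s : nat).+1 == t) && (x s == k0)])%:R.

Definition PD1_Z (psi : par) (j : 'I_J) : R := \sum_(x1 : st) pXD psi j x1 true.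
Definition PZD1 (psi : par) (j : 'I_J) : R := pi_ psi j * PD1_Z psi j.

Definition EX1 (T0 T : nat) (psi : par) (j : 'I_J) (t : nat) : 'rV[R]_K :=
  \row_k0 ((\sum_(x : {ffun 'I_T -> st}) stateAt x t k0 *
      chain_prob 1 (fun x1 => pXD psi j x1 true) (tr_treated T0 psi j) x)
     / PD1_Z psi j).

(* E[X_t(0) | D = 1, Z = j]: by the model assumptions X(0) given D=1, Z=j is
   Markov with the untreated transitions p0. *)
Definition EX0 (T : nat) (psi : par) (j : 'I_J) (t : nat) : 'rV[R]_K :=
  \row_k0 ((\sum_(x : {ffun 'I_T -> st}) stateAt x t k0 *
      chain_prob 1 (fun x1 => pXD psi j x1 true) (p0 psi j) x)
     / PD1_Z psi j).

Definition muATTj (T0 T : nat) (psi : par) (j : 'I_J) (t : nat) : 'rV[R]_K :=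
  EX1 T0 T psi j t - EX0 T psi j t.

Definition ATT (T0 T : nat) (psi : par) (t : nat) : 'rV[R]_K :=
  \sum_(j < J) (PZD1 psi j / \sum_(m < J) PZD1 psi m) *: muATTj T0 T psi j t.

(* psi in Theta_psi, with all components genuine (conditional) pmfs, and the
   overlap assumption eps <= Pr(D=1 | X_1^{T0}, Z=j) <= 1 - eps (which in this
   parametrization depends only on x_1; stated in multiplied-out form). *)
Definition valid_param (T0 T : nat) (eps : R) (psi : par) : Prop :=
  [/\ (\sum_(j < J) pi_ psi j = 1 /\
       forall j, eps <= pi_ psi j <= 1 - eps),
      (forall j x d, 0 <= pXD psi j x d) /\
      (forall j, \sum_(x : st) \sum_(d : bool) pXD psi j x d = 1),
      (forall j t x x', (2 <= t <= T)%N -> 0 <= p0 psi j t x x') /\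
      (forall j t x', (2 <= t <= T)%N -> \sum_(x : st) p0 psi j t x x' = 1),
      (forall j t x x', (T0 < t <= T)%N -> 0 <= p1 psi j t x x') /\
      (forall j t x', (T0 < t <= T)%N -> \sum_(x : st) p1 psi j t x x' = 1)
    & (forall j x,
        eps * (pXD psi j x false + pXD psi j x true) <= pXD psi j x true /\
        pXD psi j x true <= (1 - eps) * (pXD psi j x false + pXD psi j x true))].

Section ID.
Variables (T k : nat) (psi : par).
Local Notation xi1 := {ffun 'I_k -> st}.
Local Notation xi4 := {ffun 'I_(T - k.+2) -> st}.

Definition P1 (j : 'I_J) (x1 : xi1) (d : bool) : R :=
  chain_prob 1 (fun y => pXD psi j y d) (p0 psi j) x1.
Definition tau (j : 'I_J) (x1 : xi1) (d : bool) : R :=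
  pi_ psi j * P1 j x1 d / \sum_(m < J) pi_ psi m * P1 m x1 d.
(* q21(xi2 | xi1) = p0_{k+1}(xi2 | x_k), x_k the last entry of xi1 *)
Definition q21 (j : 'I_J) (x2 : st) (x1 : xi1) : R :=
  \sum_(s < k | (s : nat).+1 == k) p0 psi j k.+1 x2 (x1 s).
Definition q32 (j : 'I_J) (x3 x2 : st) : R := p0 psi j k.+2 x3 x2.
(* xi4 = (x_{k+3}, ..., x_T): index s is period s + k + 3 *)
Definition q43 (j : 'I_J) (x4 : xi4) (x3 : st) : R :=
  chain_prob k.+3 (fun y => p0 psi j k.+3 y x3) (p0 psi j) x4.
Definition lam1 (j : 'I_J) (x2 : st) (x1 : xi1) : R := tau j x1 false * q21 j x2 x1.

Definition Lbar (x2 : st) (a : 'I_J -> xi1) : 'M[R]_J :=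
  \matrix_(i, j) lam1 j x2 (a i).
(* row 0 is all ones; row i >= 1 uses b_i := b i (b applied to row 0 unused) *)
Definition Lmat (x3 : st) (b : 'I_J -> xi4) : 'M[R]_J :=
  \matrix_(i, j) (if (i : nat) == 0%N then 1 else q43 j (b i) x3).
Definition Dmat (x3 x2 : st) : 'M[R]_J := diag_mx (\row_j q32 j x3 x2).

Definition ID_cond : Prop :=
  [/\ (exists xs3 : st, forall x3 : st,
         exists (cx2 bx2 bx3 : st) (a : 'I_J -> xi1) (b : 'I_J -> xi4),
           [/\ Lbar cx2 a \in unitmx, Lbar bx2 a \in unitmx,
               Lmat x3 b \in unitmx, Lmat xs3 b \in unitmx & Lmat bx3 b \in unitmx] /\
           injective (fun j : 'I_J =>
             (Dmat x3 cx2 *m invmx (Dmat bx3 cx2) *m Dmat bx3 bx2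
                *m invmx (Dmat x3 bx2)) j j)),
      (forall j x3 x2, 0 < q32 j x3 x2) /\ (forall j x4 x3, 0 < q43 j x4 x3),
      (forall x1 : xi1, exists c : 'I_J -> st,
          \matrix_(i, j) q21 j (c i) x1 \in unitmx)
    & (forall x2 : st, exists e : 'I_J -> xi1,
          \matrix_(i, j) (tau j (e i) true * q21 j x2 (e i)) \in unitmx)].
End ID.
End Model.

From HB Require Import structures.
From mathcomp Require Import all_boot all_order all_algebra.
From mathcomp Require Import reals.
From mathcomp Require Import ring lra zify.
Set Implicit Arguments. Unset Strict Implicit. Unset Printing Implicit Defensive.
Import Order.TTheory GRing.Theory Num.Theory.
Local Open Scope ring_scope.

(* The ATT is a ratio of sums over paths of the observed pmf p_W(., D = 1) and of the
   counterfactual pmf Pr(X(0) = x, D = 1) = sum_j pi^j P^j(x_1, D = 1) prod_t p^j_t(x_t | x_t-1),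
   so it suffices to identify the latter.  Split a path as (xi1, xi2, xi3, xi4), xi1 of length k.
   For fixed xi2, xi3 the matrix [p_W(a_i, xi2, xi3, b_l, D = 0)]_(i,l), its column 0 summed
   over xi4, factors as L_xi2 diag_j(q32^j(xi3 | xi2)) M_xi3; four such factorizations with
   pairwise distinct diagonal ratios determine M_xi3 up to a relabelling s of the types, the
   column of ones fixing the scale.  Inverting M_xi3 identifies Pr(Z = j, xi1, xi2, xi3, D = 0)
   and q43^j(. | xi3) up to s, and the reference state xi3* makes s independent of xi3.
   Summing out xi3 and xi2 identifies Pr(Z = j, xi1, D = 0) and q21; condition (c) and overlap
   then identify Pr(Z = j, xi1, D = 1), hence the counterfactual pmf.  As every quantity is
   summed over the types, s never has to be resolved. *)

Lemma sum_relabel (V : nmodType) (I : finType) (s : I -> I) (G : I -> V) :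
  injective s -> \sum_i G (s i) = \sum_i G i.
Proof. by move=> s_inj; rewrite [RHS](reindex_inj s_inj). Qed.

(** * Invertible matrices and diagonal factorizations *)

Section DiagFactorization.
Variables (F : fieldType) (n : nat).
Implicit Types (A L M : 'M[F]_n) (d : 'I_n -> F).

Lemma unitmx_diag d : (diag_mx (\row_j d j) \in unitmx) = [forall j, d j != 0].
Proof.
rewrite unitmxE det_diag unitfE; apply/prodf_neq0/forallP => dP j.
  by have := dP j isT; rewrite mxE.
by rewrite mxE => _; apply: dP.
Qed.

Lemma invmx_diag d : (forall j, d j != 0) ->
  invmx (diag_mx (\row_j d j)) = diag_mx (\row_j (d j)^-1).
Proof.
move=> d_neq0; have uD : diag_mx (\row_j d j) \in unitmx.
  by rewrite unitmx_diag; apply/forallP.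
have DD' : diag_mx (\row_j d j) *m diag_mx (\row_j (d j)^-1) = 1%:M.
  rewrite mulmx_diag; apply/matrixP => i j; rewrite !mxE.
  by case: eqP => [->|]; rewrite ?mulr1n ?mulr0n // mulfV.
by rewrite -[RHS](mulKmx uD) DD' mulmx1.
Qed.

Lemma unitmx_ker0_row A (z : 'I_n -> F) : A \in unitmx ->
  (forall l, \sum_j z j * A j l = 0) -> forall j, z j = 0.
Proof.
rewrite -row_free_unit => /row_free_inj injA zA j.
have : \row_j z j *m A = 0 *m A.
  rewrite mul0mx; apply/rowP => l; rewrite !mxE -[RHS](zA l).
  by apply: eq_bigr => i _; rewrite mxE.
by move/injA/rowP/(_ j); rewrite !mxE.
Qed.

Lemma unitmx_ker0_col A (z : 'I_n -> F) : A \in unitmx ->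
  (forall i, \sum_j A i j * z j = 0) -> forall j, z j = 0.
Proof.
move=> uA Az; apply: (@unitmx_ker0_row A^T); first by rewrite unitmx_tr.
by move=> i; under eq_bigr do rewrite mxE mulrC; apply: Az.
Qed.

Lemma unitmx_row_neq0 A i : A \in unitmx -> exists j, A i j != 0.
Proof.
rewrite -row_free_unit => /row_free_inj injA; apply/existsP; apply: contraT.
rewrite negb_exists => /forallP Ai0.
have : row i A = 0 *m A.
  by rewrite mul0mx; apply/rowP => j; rewrite !mxE; apply/eqP/negbNE.
by rewrite rowE => /injA/rowP/(_ i); rewrite !mxE !eqxx => /eqP; rewrite oner_eq0.
Qed.

Lemma unitmx_row_inj A : A \in unitmx -> injective (fun i => row i A).
Proof.
rewrite -row_free_unit => /row_free_inj injA i i'; rewrite /= !rowE => /injA/rowP/(_ i).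
by rewrite !mxE !eqxx; case: eqP => // _ /eqP; rewrite oner_eq0.
Qed.

Definition ldm_mx L d M := L *m diag_mx (\row_j d j) *m M.

Lemma unitmx_ldm L d M :
  (ldm_mx L d M \in unitmx) = [&& L \in unitmx, [forall j, d j != 0] & M \in unitmx].
Proof. by rewrite /ldm_mx !unitmx_mul unitmx_diag andbA. Qed.

Lemma ldm_mx_diag_neq0 L d M : ldm_mx L d M \in unitmx -> forall j, d j != 0.
Proof. by rewrite unitmx_ldm => /and3P[_ /forallP]. Qed.

Lemma ldm_mx_intertwine L d M L' d' M' :
  ldm_mx L d M = ldm_mx L' d' M' -> ldm_mx L d M \in unitmx ->
  forall j i, d' j * (M' *m invmx M) j i = (invmx L' *m L) j i * d i.
Proof.
move=> E U; have U' : ldm_mx L' d' M' \in unitmx by rewrite -E.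
move: U U'; rewrite !unitmx_ldm => /and3P[uL _ uM] /and3P[uL' _ uM'].
have : invmx L' *m ldm_mx L' d' M' *m invmx M = invmx L' *m ldm_mx L d M *m invmx M.
  by rewrite E.
rewrite /ldm_mx !mulmxA mulVmx // mul1mx -!mulmxA mulmxV // mulmx1 [in RHS]mulmxA.
by move/matrixP => DV j i; move: (DV j i); rewrite mul_diag_mx mul_mx_diag !mxE.
Qed.

Section FourFactorizations.
Variables (La Lb Ma Mb La' Lb' Ma' Mb' : 'M[F]_n).
Variables (daa dab dbb dba daa' dab' dbb' dba' : 'I_n -> F).
Hypotheses (Eaa : ldm_mx La daa Ma = ldm_mx La' daa' Ma')
           (Eab : ldm_mx La dab Mb = ldm_mx La' dab' Mb')
           (Ebb : ldm_mx Lb dbb Mb = ldm_mx Lb' dbb' Mb')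
           (Eba : ldm_mx Lb dba Ma = ldm_mx Lb' dba' Ma').
Hypotheses (Uaa : ldm_mx La daa Ma \in unitmx) (Uab : ldm_mx La dab Mb \in unitmx)
           (Ubb : ldm_mx Lb dbb Mb \in unitmx) (Uba : ldm_mx Lb dba Ma \in unitmx).

(* With V := Ma' Ma^-1, each factorization gives d' j * V j i = N j i * d i, with N shared
   by the two factorizations through the same L; chaining the four relations cancels N. *)
Lemma ldm_mx_ratio_eq j i : (Ma' *m invmx Ma) j i != 0 ->
  daa' j / dab' j * dbb' j / dba' j = daa i / dab i * dbb i / dba i.
Proof.
have Uaa' : ldm_mx La' daa' Ma' \in unitmx by rewrite -Eaa.
have Uab' : ldm_mx La' dab' Mb' \in unitmx by rewrite -Eab.
have Ubb' : ldm_mx Lb' dbb' Mb' \in unitmx by rewrite -Ebb.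
have := ldm_mx_intertwine Eba Uba j i; have := ldm_mx_intertwine Ebb Ubb j i.
have := ldm_mx_intertwine Eab Uab j i; have := ldm_mx_intertwine Eaa Uaa j i.
set v := (Ma' *m _) j i; set na := (invmx La' *m La) j i.
set vb := (Mb' *m _) j i; set nb := (invmx Lb' *m Lb) j i.
move=> eaa eab ebb eba v_neq0.
have na_E : na = daa' j * v / daa i by rewrite eaa mulfK ?(ldm_mx_diag_neq0 Uaa).
have vb_E : vb = na * dab i / dab' j.
  by rewrite -eab [_ * vb]mulrC mulfK ?(ldm_mx_diag_neq0 Uab').
have nb_E : nb = dbb' j * vb / dbb i by rewrite ebb mulfK ?(ldm_mx_diag_neq0 Ubb).
rewrite nb_E vb_E na_E in eba.
have dba'_E : dba' j = dbb' j * daa' j * dab i * dba i / (daa i * dab' j * dbb i).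
  apply: (mulIf v_neq0); rewrite eba; field.
  by rewrite !(ldm_mx_diag_neq0 Uaa, ldm_mx_diag_neq0 Uab', ldm_mx_diag_neq0 Ubb).
rewrite dba'_E; field.
by rewrite !(ldm_mx_diag_neq0 Uaa, ldm_mx_diag_neq0 Uab, ldm_mx_diag_neq0 Ubb,
  ldm_mx_diag_neq0 Uba, ldm_mx_diag_neq0 Uaa', ldm_mx_diag_neq0 Uab', ldm_mx_diag_neq0 Ubb').
Qed.

(* Distinct ratios leave a single nonzero entry in each row of V; the column of ones
   normalizes it to 1. *)
Lemma ldm_mx_rows_perm (i0 : 'I_n) :
  injective (fun i => daa i / dab i * dbb i / dba i) ->
  (forall j, Ma j i0 = 1) -> (forall j, Ma' j i0 = 1) ->
  exists2 s : 'I_n -> 'I_n, injective s & forall j l, Ma' j l = Ma (s j) l.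
Proof.
move=> ratio_inj Ma1 Ma'1.
have Uaa' : ldm_mx La' daa' Ma' \in unitmx by rewrite -Eaa.
move: (Uaa) Uaa'; rewrite !unitmx_ldm => /and3P[_ _ uMa] /and3P[_ _ uMa'].
set V := Ma' *m invmx Ma.
have /fin_all_exists[s V_s] : forall j, exists i, V j i != 0.
  by move=> j; apply: unitmx_row_neq0; rewrite unitmx_mul uMa' unitmx_inv.
have V_supp j i : V j i != 0 -> i = s j.
  by move=> Vji; apply: ratio_inj; rewrite /= -(ldm_mx_ratio_eq Vji) (ldm_mx_ratio_eq (V_s j)).
have Ma'E j l : Ma' j l = V j (s j) * Ma (s j) l.
  rewrite -[Ma'](mulmxKV uMa) -/V mxE (bigD1 (s j)) //= big1 ?addr0 // => i ne_i.
  by case: (eqVneq (V j i) 0) => [->|/V_supp eq_i]; [rewrite mul0r | rewrite eq_i eqxx in ne_i].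
have V1 j : V j (s j) = 1 by have := Ma'E j i0; rewrite Ma1 Ma'1 mulr1.
have Ma'_s j l : Ma' j l = Ma (s j) l by rewrite Ma'E V1 mul1r.
exists s => // j j' s_jj'; apply: (unitmx_row_inj uMa'); apply/rowP => l.
by rewrite !mxE !Ma'_s s_jj'.
Qed.

End FourFactorizations.

End DiagFactorization.

(** * Probabilities of Markov paths *)

Section MarkovPaths.
Variables (R : realType) (K : nat).
Local Notation st := 'I_K.
Implicit Types (init : st -> R) (tr : nat -> st -> st -> R).

Definition fnth {m} (d : st) (f : {ffun 'I_m -> st}) (i : nat) : st :=
  if insub i is Some o then f o else d.

Lemma fnthE m d (f : {ffun 'I_m -> st}) (o : 'I_m) : fnth d f o = f o.
Proof. by rewrite /fnth valK. Qed.

Lemma fnth_ord m d (f : {ffun 'I_m -> st}) i (lt_im : (i < m)%N) :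
  fnth d f i = f (Ordinal lt_im).
Proof. by rewrite -(fnthE d f). Qed.

Definition chain_probn off init tr n (g : nat -> st) : R :=
  (if n is 0 then 1 else init (g 0%N)) * \prod_(1 <= s < n) tr (s + off)%N (g s) (g s.-1).

Lemma chain_probE {n off init tr} (x : {ffun 'I_n -> st}) d :
  chain_prob off init tr x = chain_probn off init tr n (fnth d x).
Proof.
rewrite /chain_prob /chain_probn; case: n x => [|n] x; first by rewrite !big_ord0 big_geq.
congr (_ * _).
  by rewrite big_mkcond big_ord_recl /= big1 ?mulr1 // -(fnthE d x).
pose G s := if insub s is Some o then
  \prod_(r < n.+1 | r.+1 == nat_of_ord o) tr (o + off)%N (x o) (x r) else 1.
transitivity (\prod_(s < n.+1) G s); first by apply: eq_bigr => s _; rewrite /G valK.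
rewrite -(big_mkord xpredT G) big_ltn // /G insubT /= big_pred0 // mul1r.
apply: eq_big_nat => -[|s] // /andP[_ lt_sn]; rewrite insubT /=.
rewrite (big_pred1 (Ordinal (ltnW lt_sn))) => [|r]; last by rewrite /= eqSS.
by rewrite (fnth_ord d x lt_sn) (fnth_ord d x (ltnW lt_sn)).
Qed.

Lemma eq_chain_probn off init tr n g g' : (forall i, (i < n)%N -> g i = g' i) ->
  chain_probn off init tr n g = chain_probn off init tr n g'.
Proof.
rewrite /chain_probn; case: n => [|n] eq_g; first by rewrite !big_geq.
rewrite eq_g //; congr (_ * _); apply: eq_big_nat => s /andP[_ lt_sn].
by rewrite !eq_g // (leq_ltn_trans (leq_pred s)).
Qed.

Lemma eq_chain_probn_tr off init tr tr' n g :
  (forall s, (1 <= s < n)%N -> tr (s + off)%N =2 tr' (s + off)%N) ->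
  chain_probn off init tr n g = chain_probn off init tr' n g.
Proof. by move=> eq_tr; congr (_ * _); apply: eq_big_nat => s /eq_tr. Qed.

Lemma chain_probnS off init tr n g : (0 < n)%N ->
  chain_probn off init tr n.+1 g = chain_probn off init tr n g * tr (n + off)%N (g n) (g n.-1).
Proof. by case: n => // n _; rewrite /chain_probn big_nat_recr //= mulrA. Qed.

Lemma chain_probn_cat off init tr m n g : (0 < m)%N ->
  chain_probn off init tr (m + n) g =
  chain_probn off init tr m g *
  chain_probn (m + off) (fun y => tr (m + off)%N y (g m.-1)) tr n (fun i => g (i + m)%N).
Proof.
case: m => // m _; case: n => [|n].
  by rewrite addn0 [X in _ * X]/chain_probn big_geq // !mulr1.
rewrite /chain_probn addnS /= (big_cat_nat (n := m.+1)) //=; last by lia.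
rewrite -mulrA; congr (_ * _).
rewrite (big_addn 0 _ m.+1) (_ : ((m.+1 + n).+1 - m.+1 = n.+1)%N); last by lia.
congr (_ * _); rewrite big_ltn //; congr (_ * _); apply: eq_big_nat => -[|s] // _.
by rewrite addnA addSn.
Qed.

Definition ffun_rcons {n} (f : {ffun 'I_n -> st}) (y : st) : {ffun 'I_n.+1 -> st} :=
  [ffun i : 'I_n.+1 => if (i < n)%N then fnth y f i else y].

Lemma fnth_rcons n (f : {ffun 'I_n -> st}) y d i : (i < n.+1)%N ->
  fnth d (ffun_rcons f y) i = if (i < n)%N then fnth d f i else y.
Proof.
move=> lt_in; rewrite (fnth_ord _ _ lt_in) ffunE /=.
by case: ifP => // lt_i; rewrite !(fnth_ord _ _ lt_i).
Qed.

Lemma sum_ffunS n (F : {ffun 'I_n.+1 -> st} -> R) :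
  \sum_x F x = \sum_(f : {ffun 'I_n -> st}) \sum_y F (ffun_rcons f y).
Proof.
rewrite pair_big /= (reindex (fun p => ffun_rcons p.1 p.2)) //.
pose restr (x : {ffun 'I_n.+1 -> st}) := [ffun j : 'I_n => x (widen_ord (leqnSn n) j)].
apply: onW_bij; exists (fun x => (restr x, x ord_max)) => [[f y]|x] /=.
  congr (_, _); last by rewrite ffunE /= ltnn.
  by apply/ffunP => j; rewrite !ffunE /= ltn_ord fnthE.
apply/ffunP => i; rewrite ffunE; case: ltnP => [lt_in|le_ni].
  by rewrite (fnth_ord _ _ lt_in) ffunE; congr (x _); apply: val_inj.
by congr (x _); apply: val_inj => /=; apply/eqP; rewrite eqn_leq le_ni -ltnS ltn_ord.
Qed.

Lemma sum_chain_prob n off init tr : (0 < n)%N ->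
  (forall s y', (1 <= s < n)%N -> \sum_y tr (s + off)%N y y' = 1) ->
  \sum_(x : {ffun 'I_n -> st}) chain_prob off init tr x = \sum_y init y.
Proof.
case: n => // n _; elim: n => [|n IH] tr1; rewrite sum_ffunS.
  rewrite (eq_bigr (fun _ => \sum_y init y)) => [|f _].
    by rewrite sumr_const card_ffun !card_ord expn0 mulr1n.
  by apply: eq_bigr => y _; rewrite (chain_probE _ y) /chain_probn big_geq // mulr1 fnth_rcons.
rewrite -IH => [|s y' /andP[s_ge1 lt_sn]]; last by rewrite tr1 // s_ge1 ltnW.
apply: eq_bigr => f _.
have rcons_E y : chain_prob off init tr (ffun_rcons f y) =
    chain_prob off init tr f * tr (n.+1 + off)%N y (f ord_max).
  rewrite !(chain_probE _ (f ord_max)) chain_probnS // !fnth_rcons // ltnn ltnSn.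
  congr (_ * _); last by rewrite (fnth_ord _ _ (ltnSn n)).
  by apply: eq_chain_probn => i lt_in; rewrite fnth_rcons ?lt_in // ltnW.
under eq_bigr do rewrite rcons_E.
by rewrite -mulr_sumr tr1 ?mulr1 //= ltnSn.
Qed.

Lemma chain_probn1 off init tr g : chain_probn off init tr 1 g = init (g 0%N).
Proof. by rewrite /chain_probn big_geq ?mulr1. Qed.

Section Join.
Variables (T k : nat).
Hypotheses (k_gt0 : (0 < k)%N) (kT : (k.+2 <= T)%N).
Local Notation xi1 := {ffun 'I_k -> st}.
Local Notation xi4 := {ffun 'I_(T - k.+2) -> st}.

Definition join_path (x1 : xi1) (x2 x3 : st) (x4 : xi4) : {ffun 'I_T -> st} :=
  [ffun i : 'I_T => if (i < k)%N then fnth x2 x1 i else if i == k :> nat then x2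
     else if i == k.+1 :> nat then x3 else fnth x2 x4 (i - k.+2)].

Lemma join_path_surj (x : {ffun 'I_T -> st}) :
  exists x1 x2 x3 (x4 : xi4), x = join_path x1 x2 x3 x4.
Proof.
have T_gt0 : (0 < T)%N by lia.
pose g := fnth (x (Ordinal T_gt0)) x.
exists [ffun i : 'I_k => g i], (g k), (g k.+1), [ffun i : 'I_(T - k.+2) => g (i + k.+2)%N].
apply/ffunP => i; rewrite !ffunE -(fnthE (x (Ordinal T_gt0)) x) -/g.
case: ifP => lt_ik; first by rewrite (fnth_ord _ _ lt_ik) ffunE.
case: eqP => [-> //|ne_ik]; case: eqP => [-> //|ne_ik1].
have lt_i4 : (i - k.+2 < T - k.+2)%N by have := ltn_ord i; lia.
by rewrite (fnth_ord _ _ lt_i4) ffunE /=; congr (g _); lia.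
Qed.

Lemma chain_prob_join init tr x1 x2 x3 (x4 : xi4) :
  chain_prob 1 init tr (join_path x1 x2 x3 x4) =
  chain_prob 1 init tr x1 * tr k.+1 x2 (fnth x2 x1 k.-1) * tr k.+2 x3 x2 *
  chain_prob k.+3 (fun y => tr k.+3 y x3) tr x4.
Proof.
set g := fnth x2 (join_path x1 x2 x3 x4).
have gE i : (i < T)%N -> g i = if (i < k)%N then fnth x2 x1 i else if i == k then x2
    else if i == k.+1 then x3 else fnth x2 x4 (i - k.+2).
  by move=> lt_iT; rewrite /g (fnth_ord _ _ lt_iT) ffunE.
have g1 i : (i < k)%N -> g i = fnth x2 x1 i.
  by move=> lt_ik; rewrite gE ?lt_ik //; lia.
have g2 : g k = x2 by rewrite gE ?ltnn ?eqxx //; lia.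
have g3 : g k.+1 = x3.
  by rewrite gE; [rewrite ltnNge leqnSn /= gtn_eqF ?eqxx | lia].
have g4 i : (i < T - k.+2)%N -> g (i + k.+2) = fnth x2 x4 i.
  by move=> lt_i4; rewrite gE; [rewrite !ifF ?addnK //; lia | lia].
rewrite !(chain_probE _ x2) -/g.
transitivity (chain_probn 1 init tr (k + (1 + (1 + (T - k.+2)))) g).
  by congr chain_probn; lia.
rewrite !chain_probn_cat //.
have -> : chain_probn 1 init tr k g = chain_probn 1 init tr k (fnth x2 x1).
  by apply: eq_chain_probn.
have -> : chain_probn (1 + (1 + (k + 1))) ((tr (1 + (1 + (k + 1)))%N)^~ (g (1.-1 + 1 + k)%N))
    tr (T - k.+2) (fun i => g (i + 1 + 1 + k)%N) =
    chain_probn k.+3 ((tr k.+3)^~ x3) tr (T - k.+2) (fnth x2 x4).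
  have -> : (1.-1 + 1 + k = k.+1)%N by rewrite add0n add1n.
  have -> : (1 + (1 + (k + 1)) = k.+3)%N by rewrite !add1n addn1.
  by rewrite g3; apply: eq_chain_probn => i /g4 <-; rewrite -!addnA !add1n.
rewrite !chain_probn1 !mulrA (_ : 1.-1 + k = k)%N // !add0n !add1n !addn1 g3 g2 g1 //.
by rewrite ltn_predL.
Qed.
End Join.

End MarkovPaths.

(** * The model along a split path *)

Section Model.
Variables (R : realType) (K J T0 T k : nat).
Hypotheses (k_gt0 : (0 < k)%N) (kT : (k.+3 <= T)%N) (kT0 : (k.+1 <= T0)%N).
Local Notation st := 'I_K.
Local Notation xi1 := {ffun 'I_k -> st}.
Local Notation xi4 := {ffun 'I_(T - k.+2) -> st}.
Local Notation par := (param R K J).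
Local Notation join := (@join_path K T k).

(* Pr(X(0) = x, D = 1), Pr(Z = j, X_1^k = xi1, D = d) and
   Pr(Z = j, X_1^(k+2) = (xi1, xi2, xi3), D = 0) under the parameter p. *)
Definition pX0D1 (p : par) (x : {ffun 'I_T -> st}) : R :=
  \sum_j pi_ p j * chain_prob 1 (fun y => pXD p j y true) (p0 p j) x.

Definition pZX1D (p : par) (d : bool) j (x1 : xi1) : R := pi_ p j * P1 p j x1 d.

Definition pZX3D0 (p : par) j (x1 : xi1) x2 x3 : R :=
  pZX1D p false j x1 * q21 p j x2 x1 * q32 k p j x3 x2.

Lemma q21E (p : par) j x2 (x1 : xi1) d : q21 p j x2 x1 = p0 p j k.+1 x2 (fnth d x1 k.-1).
Proof.
have lt_k1k : (k.-1 < k)%N by rewrite ltn_predL.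
rewrite /q21 (big_pred1 (Ordinal lt_k1k)) ?(fnth_ord _ _ lt_k1k) // => s /=.
by apply/eqP/eqP => [s_k|-> /=]; [apply: val_inj => /=; lia | lia].
Qed.

Lemma pW0_join (p : par) x1 x2 x3 x4 :
  pW T0 p (join x1 x2 x3 x4) false = \sum_j pZX3D0 p j x1 x2 x3 * q43 p j x4 x3.
Proof.
apply: eq_bigr => j _ /=; rewrite (chain_prob_join k_gt0 (ltnW kT)).
by rewrite /pZX3D0 /pZX1D (q21E _ _ _ _ x2) /P1 /q32 /q43; ring.
Qed.

Lemma pX0D1_join (p : par) x1 x2 x3 x4 :
  pX0D1 p (join x1 x2 x3 x4) =
  \sum_j pZX1D p true j x1 * q21 p j x2 x1 * q32 k p j x3 x2 * q43 p j x4 x3.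
Proof.
apply: eq_bigr => j _; rewrite (chain_prob_join k_gt0 (ltnW kT)).
by rewrite /pZX1D (q21E _ _ _ _ x2) /P1 /q32 /q43; ring.
Qed.

Lemma pW1_join (p : par) x1 x2 x3 x4 :
  pW T0 p (join x1 x2 x3 x4) true =
  \sum_j pZX1D p true j x1 * q21 p j x2 x1 *
    (tr_treated T0 p j k.+2 x3 x2 *
     chain_prob k.+3 (fun y => tr_treated T0 p j k.+3 y x3) (tr_treated T0 p j) x4).
Proof.
apply: eq_bigr => j _ /=; rewrite (chain_prob_join k_gt0 (ltnW kT)).
have pre_T0 t : (t <= T0)%N -> tr_treated T0 p j t = p0 p j t by rewrite /tr_treated => ->.
rewrite pre_T0 // /pZX1D (q21E _ _ _ _ x2) /P1 !(chain_probE _ x2).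
rewrite (@eq_chain_probn_tr _ _ _ _ _ (p0 p j)); first by ring.
by move=> s /andP[_ lt_sk]; rewrite pre_T0 //; lia.
Qed.

Lemma P1_factor (p : par) j (x1 : xi1) :
  exists y0 r, forall d, P1 p j x1 d = pXD p j y0 d * r.
Proof.
pose d0 := x1 (Ordinal k_gt0); set g := fnth d0 x1.
exists (g 0%N), (\prod_(1 <= s < k) p0 p j (s + 1)%N (g s) (g s.-1)) => d.
by rewrite /P1 (chain_probE _ d0) -/g /chain_probn -(prednK k_gt0).
Qed.

Definition Lhead (p : par) x2 (a : 'I_J -> xi1) : 'M[R]_J :=
  \matrix_(i, j) (pZX1D p false j (a i) * q21 p j x2 (a i)).

Lemma Lhead_unit (p : par) x2 (a : 'I_J -> xi1) :
  Lbar p x2 a \in unitmx -> Lhead p x2 a \in unitmx.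
Proof.
have -> : Lbar p x2 a =
    diag_mx (\row_i (\sum_m pi_ p m * P1 p m (a i) false)^-1) *m Lhead p x2 a.
  by apply/matrixP => i j; rewrite mul_diag_mx !mxE /lam1 /tau /pZX1D; ring.
by rewrite unitmx_mul => /andP[].
Qed.

Lemma Dmat_ratio (p : par) x3 cx2 bx2 bx3 j : (forall j x3 x2, 0 < q32 k p j x3 x2) ->
  (Dmat k p x3 cx2 *m invmx (Dmat k p bx3 cx2) *m Dmat k p bx3 bx2
     *m invmx (Dmat k p x3 bx2)) j j =
  q32 k p j x3 cx2 / q32 k p j bx3 cx2 * q32 k p j bx3 bx2 / q32 k p j x3 bx2.
Proof.
move=> q32_gt0; rewrite /Dmat !invmx_diag ?mulmx_diag ?mxE ?eqxx ?mulr1n //;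
  by move=> m; rewrite gt_eqF.
Qed.

(* Column l = 0 sums xi4 out, matching the row of ones of [Lmat]. *)
Definition obs_entry (p : par) (x1 : xi1) x2 x3 (b : 'I_J -> xi4) (l : 'I_J) : R :=
  if (l : nat) == 0%N then \sum_(x4 : xi4) pW T0 p (join x1 x2 x3 x4) false
  else pW T0 p (join x1 x2 x3 (b l)) false.

Definition obs_mx (p : par) x2 x3 (a : 'I_J -> xi1) (b : 'I_J -> xi4) : 'M[R]_J :=
  \matrix_(i, l) obs_entry p (a i) x2 x3 b l.

Section ValidParam.
Variables (eps : R) (p : par).
Hypothesis p_valid : valid_param T0 T eps p.

Lemma sum_p0 j t y' : (2 <= t <= T)%N -> \sum_y p0 p j t y y' = 1.
Proof. by case: p_valid => _ _ [_ p0_sum1] _ _; apply: p0_sum1. Qed.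

Lemma sum_tr_treated j t y' : (2 <= t <= T)%N -> \sum_y tr_treated T0 p j t y y' = 1.
Proof.
move=> t_range; rewrite /tr_treated; case: ifP => le_tT0; first exact: sum_p0.
by case: p_valid => _ _ _ [_ p1_sum1] _; apply: p1_sum1; lia.
Qed.

Lemma sum_q21 j (x1 : xi1) : \sum_x2 q21 p j x2 x1 = 1.
Proof. by under eq_bigr do rewrite (q21E _ _ _ _ (x1 (Ordinal k_gt0))); apply: sum_p0; lia. Qed.

Lemma sum_q32 j x2 : \sum_x3 q32 k p j x3 x2 = 1.
Proof. by apply: sum_p0; lia. Qed.

Lemma sum_q43 j x3 : \sum_(x4 : xi4) q43 p j x4 x3 = 1.
Proof.
rewrite /q43 sum_chain_prob; [apply: sum_p0 | | move=> s y' s_range; apply: sum_p0]; lia.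
Qed.

Lemma sum_treated_tail j x2 :
  \sum_x3 \sum_(x4 : xi4) tr_treated T0 p j k.+2 x3 x2 *
     chain_prob k.+3 (fun y => tr_treated T0 p j k.+3 y x3) (tr_treated T0 p j) x4 = 1.
Proof.
rewrite -(@sum_tr_treated j k.+2 x2); last by lia.
apply: eq_bigr => x3 _; rewrite -mulr_sumr sum_chain_prob => [||s y' s_range].
- by rewrite sum_tr_treated ?mulr1 //; lia.
- by lia.
by apply: sum_tr_treated; lia.
Qed.

Lemma sum_pW0_join x1 x2 x3 :
  \sum_(x4 : xi4) pW T0 p (join x1 x2 x3 x4) false = \sum_j pZX3D0 p j x1 x2 x3.
Proof.
under eq_bigr do rewrite pW0_join; rewrite exchange_big /=.
by apply: eq_bigr => j _; rewrite -mulr_sumr sum_q43 mulr1.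
Qed.

Lemma sum_pW1_join x1 x2 :
  \sum_x3 \sum_(x4 : xi4) pW T0 p (join x1 x2 x3 x4) true =
  \sum_j pZX1D p true j x1 * q21 p j x2 x1.
Proof.
under eq_bigr do under eq_bigr do rewrite pW1_join.
under eq_bigr do rewrite exchange_big; rewrite exchange_big /=.
apply: eq_bigr => j _; set c := _ * q21 _ _ _ _.
rewrite -[RHS]mulr1 -(sum_treated_tail j x2) (mulr_sumr _ _ _ c).
by apply: eq_bigr => x3 _; rewrite (mulr_sumr _ _ _ c).
Qed.

Lemma pZX1D_overlap j (x1 : xi1) : 0 < eps ->
  pZX1D p false j x1 = 0 -> pZX1D p true j x1 = 0.
Proof.
move=> eps_gt0; have [y0 [r P1E]] := P1_factor p j x1; rewrite /pZX1D !P1E.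
case: p_valid => [[_ pi_range] [pXD_ge0 _] _ _ overlap].
have pi_gt0 : 0 < pi_ p j by case/andP: (pi_range j) => le_eps _; apply: lt_le_trans le_eps.
move/eqP; rewrite !mulf_eq0 (gt_eqF pi_gt0) /= => /orP[/eqP pX0|/eqP ->]; last by rewrite !mulr0.
have [_] := overlap j y0; rewrite pX0 add0r mulrBl mul1r => le_treated.
have : eps * pXD p j y0 true <= 0 by lra.
rewrite pmulr_rle0 // => pX1_le0.
have -> : pXD p j y0 true = 0 by apply/eqP; rewrite eq_le pX1_le0 pXD_ge0.
by rewrite !mul0r mulr0.
Qed.

Lemma obs_entryE x1 x2 x3 b l :
  obs_entry p x1 x2 x3 b l = \sum_j pZX3D0 p j x1 x2 x3 * Lmat p x3 b l j.
Proof.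
rewrite /obs_entry; under [RHS]eq_bigr do rewrite mxE.
case: eqP => _; first by rewrite sum_pW0_join; under [RHS]eq_bigr do rewrite mulr1.
by rewrite pW0_join.
Qed.

Lemma obs_mx_ldm x2 x3 a b :
  obs_mx p x2 x3 a b = ldm_mx (Lhead p x2 a) (fun j => q32 k p j x3 x2) (Lmat p x3 b)^T.
Proof.
apply/matrixP => i l; rewrite /ldm_mx mul_mx_diag !mxE obs_entryE.
by apply: eq_bigr => j _; rewrite !mxE.
Qed.
End ValidParam.

(** * Identification of the counterfactual pmf *)

Section Identification.
Variables (eps : R) (psis psi : par).
Hypotheses (J_gt0 : (0 < J)%N) (eps_gt0 : 0 < eps).
Hypotheses (psis_valid : valid_param T0 T eps psis) (psi_valid : valid_param T0 T eps psi).
Hypothesis same_pW : forall (x : {ffun 'I_T -> st}) d, pW T0 psi x d = pW T0 psis x d.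
Hypothesis psis_ID : ID_cond T k psis.

Let q32_gt0 : forall j x3 x2, 0 < q32 k psis j x3 x2.
Proof. by case: psis_ID => _ []. Qed.

Lemma obs_entry_same x1 x2 x3 b l : obs_entry psi x1 x2 x3 b l = obs_entry psis x1 x2 x3 b l.
Proof. by rewrite /obs_entry; case: eqP => _; [apply: eq_bigr => x4 _ |]; rewrite same_pW. Qed.

Lemma obs_mx_same x2 x3 (a : 'I_J -> xi1) (b : 'I_J -> xi4) :
  obs_mx psi x2 x3 a b = obs_mx psis x2 x3 a b.
Proof. by apply/matrixP => i l; rewrite !mxE obs_entry_same. Qed.

Lemma obs_mx_unit x2 x3 (a : 'I_J -> xi1) (b : 'I_J -> xi4) :
  Lbar psis x2 a \in unitmx -> Lmat psis x3 b \in unitmx ->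
  obs_mx psis x2 x3 a b \in unitmx.
Proof.
move=> /Lhead_unit uL uM; rewrite (obs_mx_ldm psis_valid) unitmx_ldm uL unitmx_tr uM andbT.
by apply/forallP => j; rewrite gt_eqF.
Qed.

Lemma psi_factors_unit x2 x3 (a : 'I_J -> xi1) (b : 'I_J -> xi4) :
  Lbar psis x2 a \in unitmx -> Lmat psis x3 b \in unitmx ->
  [/\ Lhead psi x2 a \in unitmx, forall j, q32 k psi j x3 x2 != 0 & Lmat psi x3 b \in unitmx].
Proof.
move=> uL uM; have := obs_mx_unit uL uM.
rewrite -obs_mx_same (obs_mx_ldm psi_valid) unitmx_ldm unitmx_tr.
by case/and3P=> ? /forallP.
Qed.

Lemma Lmat_relabel x3 cx2 bx2 bx3 (a : 'I_J -> xi1) (b : 'I_J -> xi4) :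
  Lbar psis cx2 a \in unitmx -> Lbar psis bx2 a \in unitmx ->
  Lmat psis x3 b \in unitmx -> Lmat psis bx3 b \in unitmx ->
  injective (fun j => (Dmat k psis x3 cx2 *m invmx (Dmat k psis bx3 cx2) *m Dmat k psis bx3 bx2
                       *m invmx (Dmat k psis x3 bx2)) j j) ->
  exists2 s, injective s & forall l j, Lmat psi x3 b l j = Lmat psis x3 b l (s j).
Proof.
move=> uLc uLb uM uMb ratio_inj.
have E x2 x3' : ldm_mx (Lhead psis x2 a) (fun j => q32 k psis j x3' x2) (Lmat psis x3' b)^T =
                ldm_mx (Lhead psi x2 a) (fun j => q32 k psi j x3' x2) (Lmat psi x3' b)^T.
  by rewrite -(obs_mx_ldm psis_valid) -(obs_mx_ldm psi_valid) obs_mx_same.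
have U x2 x3' : Lbar psis x2 a \in unitmx -> Lmat psis x3' b \in unitmx ->
    ldm_mx (Lhead psis x2 a) (fun j => q32 k psis j x3' x2) (Lmat psis x3' b)^T \in unitmx.
  by move=> uL uM'; rewrite -(obs_mx_ldm psis_valid) obs_mx_unit.
have ones (p : par) j : (Lmat p x3 b)^T j (Ordinal J_gt0) = 1 by rewrite !mxE.
have [s s_inj Ms] := ldm_mx_rows_perm (E cx2 x3) (E cx2 bx3) (E bx2 bx3) (E bx2 x3)
  (U _ _ uLc uM) (U _ _ uLc uMb) (U _ _ uLb uMb) (U _ _ uLb uM)
  (eq_inj ratio_inj (fun j => Dmat_ratio _ _ _ _ j q32_gt0)) (ones psis) (ones psi).
by exists s => // l j; have := Ms j l; rewrite !mxE.
Qed.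

Definition relabels_at (s : 'I_J -> 'I_J) x3 :=
  forall x1 x2 j, pZX3D0 psi j x1 x2 x3 = pZX3D0 psis (s j) x1 x2 x3.

Lemma relabels_at_Lmat s x3 (b : 'I_J -> xi4) : injective s -> Lmat psi x3 b \in unitmx ->
  (forall l j, Lmat psi x3 b l j = Lmat psis x3 b l (s j)) -> relabels_at s x3.
Proof.
move=> s_inj uM Ms x1 x2.
suff z0 j : pZX3D0 psis (s j) x1 x2 x3 - pZX3D0 psi j x1 x2 x3 = 0.
  by move=> j; apply/esym/eqP; rewrite -subr_eq0 z0.
move: j; apply: (unitmx_ker0_col uM) => l.
under eq_bigr do rewrite mulrBr; rewrite sumrB.
have -> : \sum_j Lmat psi x3 b l j * pZX3D0 psis (s j) x1 x2 x3 = obs_entry psis x1 x2 x3 b l.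
  rewrite (obs_entryE psis_valid) -[RHS](sum_relabel _ s_inj).
  by apply: eq_bigr => j _; rewrite Ms mulrC.
rewrite -obs_entry_same (obs_entryE psi_valid) -sumrB big1 // => j _.
by rewrite mulrC subrr.
Qed.

Lemma q43_relabel s x3 c (a : 'I_J -> xi1) : injective s -> relabels_at s x3 ->
  Lhead psi c a \in unitmx -> (forall j, q32 k psi j x3 c != 0) ->
  forall (x4 : xi4) j, q43 psi j x4 x3 = q43 psis (s j) x4 x3.
Proof.
move=> s_inj rel uL q32_neq0 x4.
set Y := Lhead psi c a *m diag_mx (\row_j q32 k psi j x3 c).
have uY : Y \in unitmx by rewrite unitmx_mul uL unitmx_diag; apply/forallP.
suff z0 j : q43 psis (s j) x4 x3 - q43 psi j x4 x3 = 0.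
  by move=> j; apply/eqP; rewrite eq_sym -subr_eq0 z0.
move: j; apply: (unitmx_ker0_col uY) => i.
have YE j : Y i j = pZX3D0 psi j (a i) c x3 by rewrite /Y mul_mx_diag !mxE.
have psis_E : \sum_j Y i j * q43 psis (s j) x4 x3 = pW T0 psis (join (a i) c x3 x4) false.
  by rewrite pW0_join -[RHS](sum_relabel _ s_inj); apply: eq_bigr => j _; rewrite YE rel.
have psi_E : \sum_j Y i j * q43 psi j x4 x3 = pW T0 psi (join (a i) c x3 x4) false.
  by rewrite pW0_join; apply: eq_bigr => j _; rewrite YE.
by under eq_bigr do rewrite mulrBr; rewrite sumrB psis_E psi_E same_pW subrr.
Qed.

Lemma relabels_at_unique s1 s2 xa xb c (a : 'I_J -> xi1) :
  relabels_at s1 xa -> relabels_at s2 xb -> Lhead psis c a \in unitmx ->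
  (forall j, q32 k psi j xb c != 0) -> s1 =1 s2.
Proof.
move=> rel1 rel2 uL q32_neq0 j; apply/eqP; apply: contraT => neq_s.
set al := q32 k psi j xa c; set be := q32 k psi j xb c.
set g1 := q32 k psis (s1 j) xa c; set g2 := q32 k psis (s2 j) xb c.
pose z m := (m == s1 j)%:R * (g1 * be) - (m == s2 j)%:R * (g2 * al).
suff /(_ (s1 j))/eqP : forall m, z m = 0.
  rewrite /z eqxx (negbTE neq_s) mul0r subr0 mul1r mulf_eq0.
  by rewrite (gt_eqF (q32_gt0 _ _ _)) (negbTE (q32_neq0 j)).
apply: (unitmx_ker0_col uL) => i.
have sum_delta (m0 : 'I_J) (y : R) :
    \sum_m Lhead psis c a i m * ((m == m0)%:R * y) = Lhead psis c a i m0 * y.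
  by rewrite (bigD1 m0) //= eqxx mul1r big1 ?addr0 // => m /negbTE->; rewrite mul0r mulr0.
have LE (p : par) m x3 : pZX3D0 p m (a i) c x3 = Lhead p c a i m * q32 k p m x3 c.
  by rewrite mxE.
have := rel1 (a i) c j; have := rel2 (a i) c j; rewrite !LE -/al -/be -/g1 -/g2.
under eq_bigr do rewrite mulrBr; rewrite sumrB !sum_delta !mulrA => <- <-.
by rewrite -/al -/be; ring.
Qed.

Lemma exists_relabel x3 (cx2 bx2 bx3 : st) (a : 'I_J -> xi1) (b : 'I_J -> xi4) :
  Lbar psis cx2 a \in unitmx -> Lbar psis bx2 a \in unitmx ->
  Lmat psis x3 b \in unitmx -> Lmat psis bx3 b \in unitmx ->
  injective (fun j => (Dmat k psis x3 cx2 *m invmx (Dmat k psis bx3 cx2) *m Dmat k psis bx3 bx2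
                       *m invmx (Dmat k psis x3 bx2)) j j) ->
  exists2 s, injective s & [/\ relabels_at s x3,
    forall (x4 : xi4) j, q43 psi j x4 x3 = q43 psis (s j) x4 x3,
    Lhead psis cx2 a \in unitmx & forall j, q32 k psi j x3 cx2 != 0].
Proof.
move=> uLc uLb uM uMb ratio_inj.
have [s s_inj Ms] := Lmat_relabel uLc uLb uM uMb ratio_inj.
have [uLc' q32_neq0 uM'] := psi_factors_unit uLc uM.
have rel := relabels_at_Lmat s_inj uM' Ms.
by exists s => //; split => //; [apply: q43_relabel rel uLc' q32_neq0 | apply: Lhead_unit].
Qed.

Lemma pZX1D0_q21_relabel s : (forall x3, relabels_at s x3) -> forall x1 x2 j,
  pZX1D psi false j x1 * q21 psi j x2 x1 = pZX1D psis false (s j) x1 * q21 psis (s j) x2 x1.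
Proof.
move=> rel x1 x2 j.
have : \sum_x3 pZX3D0 psi j x1 x2 x3 = \sum_x3 pZX3D0 psis (s j) x1 x2 x3.
  by apply: eq_bigr => x3 _; apply: rel.
by rewrite /pZX3D0 -!mulr_sumr (sum_q32 psi_valid) (sum_q32 psis_valid) !mulr1.
Qed.

Lemma pZX1D0_relabel s : (forall x3, relabels_at s x3) ->
  forall x1 j, pZX1D psi false j x1 = pZX1D psis false (s j) x1.
Proof.
move=> /pZX1D0_q21_relabel rel x1 j.
have : \sum_x2 pZX1D psi false j x1 * q21 psi j x2 x1 =
       \sum_x2 pZX1D psis false (s j) x1 * q21 psis (s j) x2 x1.
  by apply: eq_bigr => x2 _; apply: rel.
by rewrite -!mulr_sumr (sum_q21 psi_valid) (sum_q21 psis_valid) !mulr1.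
Qed.

Lemma pZX1D1_relabel s : injective s -> (forall x3, relabels_at s x3) ->
  forall x1 j, pZX1D psi true j x1 = pZX1D psis true (s j) x1.
Proof.
move=> s_inj rel x1; have [_ _ q21_unit _] := psis_ID; have [c uQ] := q21_unit x1.
have psi_treated j x2 : pZX1D psi true j x1 * q21 psi j x2 x1 =
    pZX1D psi true j x1 * q21 psis (s j) x2 x1.
  have [->|v_neq0] := eqVneq (pZX1D psi true j x1) 0; first by rewrite !mul0r.
  have u_neq0 : pZX1D psi false j x1 != 0.
    by apply: contra v_neq0 => /eqP/(pZX1D_overlap psi_valid eps_gt0) ->.
  congr (_ * _); apply: (mulfI u_neq0).
  by rewrite (pZX1D0_q21_relabel rel) (pZX1D0_relabel rel).
pose z m := pZX1D psi true (invF s_inj m) x1 - pZX1D psis true m x1.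
suff /(_ (s _)) : forall m, z m = 0.
  by move=> z0 j; apply/eqP; rewrite -subr_eq0; move: (z0 j); rewrite /z invF_f => ->.
apply: (unitmx_ker0_col uQ) => i; rewrite -(sum_relabel _ s_inj).
under eq_bigr do rewrite mxE /z invF_f mulrBr [_ * pZX1D psi _ _ _]mulrC -psi_treated.
rewrite sumrB (sum_relabel (fun m => q21 psis m (c i) x1 * pZX1D psis true m x1) s_inj).
under [X in _ - X]eq_bigr do rewrite mulrC.
rewrite -(sum_pW1_join psi_valid) -(sum_pW1_join psis_valid).
under eq_bigr do under eq_bigr do rewrite same_pW.
by rewrite subrr.
Qed.

Lemma pX0D1_join_relabel s : injective s -> (forall x3, relabels_at s x3) ->
  (forall x3 (x4 : xi4) j, q43 psi j x4 x3 = q43 psis (s j) x4 x3) ->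
  forall x1 x2 x3 x4, pX0D1 psi (join x1 x2 x3 x4) = pX0D1 psis (join x1 x2 x3 x4).
Proof.
move=> s_inj rel rel_q43 x1 x2 x3 x4.
rewrite !pX0D1_join -[RHS](sum_relabel _ s_inj); apply: eq_bigr => j _.
have rel_v := pZX1D1_relabel s_inj rel x1 j; have rel_u := pZX1D0_relabel rel x1 j.
have [v0|v_neq0] := eqVneq (pZX1D psi true j x1) 0; first by rewrite -rel_v v0 !mul0r.
have u_neq0 : pZX1D psi false j x1 != 0.
  by apply: contra v_neq0 => /eqP/(pZX1D_overlap psi_valid eps_gt0) ->.
have u'_neq0 : pZX1D psis false (s j) x1 != 0 by rewrite -rel_u.
have head3E (p : par) m : pZX1D p false m x1 != 0 ->
    pZX1D p true m x1 * q21 p m x2 x1 * q32 k p m x3 x2 =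
    pZX1D p true m x1 / pZX1D p false m x1 * pZX3D0 p m x1 x2 x3.
  by move=> u_m_neq0; rewrite /pZX3D0; field.
by rewrite !head3E // rel_v rel_u rel rel_q43.
Qed.

Lemma pX0D1_identified x : pX0D1 psi x = pX0D1 psis x.
Proof.
have [[xs3 IDa] _ _ _] := psis_ID.
have relabel_at x3 : exists s c (a : 'I_J -> xi1), [/\ injective s, relabels_at s x3,
    forall (x4 : xi4) j, q43 psi j x4 x3 = q43 psis (s j) x4 x3,
    Lhead psis c a \in unitmx & forall j, q32 k psi j x3 c != 0].
  have [cx2 [bx2 [bx3 [a [b [[uLc uLb uM _ uMb] ratio_inj]]]]]] := IDa x3.
  have [s s_inj [rel rel_q43 uL q32_neq0]] := exists_relabel uLc uLb uM uMb ratio_inj.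
  by exists s, cx2, a.
have [s [_ [_ [s_inj rel_s _ _ _]]]] := relabel_at xs3.
have rel_all x3 : relabels_at s x3 /\ forall (x4 : xi4) j, q43 psi j x4 x3 = q43 psis (s j) x4 x3.
  have [s' [c [a [_ rel' rel'_q43 uL q32_neq0]]]] := relabel_at x3.
  have s'E := relabels_at_unique rel_s rel' uL q32_neq0.
  by split=> [x1 x2|x4] j; rewrite s'E; [apply: rel' | apply: rel'_q43].
have [x1 [x2 [x3 [x4 ->]]]] := join_path_surj k_gt0 (ltnW kT) x.
by apply: pX0D1_join_relabel s_inj _ _ x1 x2 x3 x4 => x3'; case: (rel_all x3').
Qed.

End Identification.
End Model.

(** * The ATT *)

Section ATTFormula.
Variables (R : realType) (K J T0 T : nat) (eps : R) (p : param R K J).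
Hypotheses (J_gt0 : (0 < J)%N) (eps_gt0 : 0 < eps) (T0T : (T0 < T)%N).
Hypothesis p_valid : valid_param T0 T eps p.
Local Notation path := {ffun 'I_T -> 'I_K}.

Lemma PD1_Z_gt0 j : 0 < PD1_Z p j.
Proof.
case: p_valid => _ [_ pXD_sum1] _ _ overlap.
apply: (@lt_le_trans _ _ (eps * 1)); first by rewrite mulr1.
rewrite -(pXD_sum1 j) mulr_sumr /PD1_Z; apply: ler_sum => x _.
by rewrite big_bool /= addrC; case: (overlap j x).
Qed.

Lemma sum_pW1 : \sum_(x : path) pW T0 p x true = \sum_j PZD1 p j.
Proof.
rewrite exchange_big; apply: eq_bigr => j _; rewrite -mulr_sumr sum_chain_prob //; first by lia.
move=> s y' s_range; rewrite /tr_treated; case: ifP => le_sT0.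
  by case: p_valid => _ _ [_ p0_sum1] _ _; apply: p0_sum1; lia.
by case: p_valid => _ _ _ [_ p1_sum1] _; apply: p1_sum1; lia.
Qed.

Lemma ATT_pW t : ATT T0 T p t = \row_k0
  ((\sum_(x : path) stateAt R x t k0 * (pW T0 p x true - pX0D1 p x)) /
   \sum_(x : path) pW T0 p x true).
Proof.
have PZD1_gt0 j : 0 < PZD1 p j.
  case: p_valid => [[_ pi_range] _ _ _ _]; case/andP: (pi_range j) => le_eps _.
  by rewrite mulr_gt0 ?PD1_Z_gt0 // (lt_le_trans eps_gt0).
have S_neq0 : \sum_j PZD1 p j != 0.
  by rewrite gt_eqF // (bigD1 (Ordinal J_gt0)) //= ltr_pwDl ?sumr_ge0 // => j _; apply/ltW.
apply/rowP => k0; rewrite /ATT summxE !mxE sum_pW1.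
have -> : \sum_(x : path) stateAt R x t k0 * (pW T0 p x true - pX0D1 p x) =
    \sum_j pi_ p j *
      (\sum_(x : path) stateAt R x t k0 *
         chain_prob 1 (fun y => pXD p j y true) (tr_treated T0 p j) x -
       \sum_(x : path) stateAt R x t k0 * chain_prob 1 (fun y => pXD p j y true) (p0 p j) x).
  under eq_bigr do rewrite -sumrB mulr_sumr; rewrite exchange_big.
  apply: eq_bigr => j _; rewrite mulrBr !mulr_sumr -sumrB.
  by apply: eq_bigr => x _; ring.
rewrite mulr_suml; apply: eq_bigr => j _; rewrite !mxE /PZD1.
by field; rewrite S_neq0 gt_eqF ?PD1_Z_gt0.
Qed.
End ATTFormula.

Theorem corollary2 (R : realType) (K J T0 T k : nat) (eps : R)
    (psis psi : param R K J) :
  (2 <= K)%N -> (1 <= J)%N -> (1 <= T0)%N -> (T0 < T)%N -> 0 < eps ->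
  valid_param T0 T eps psis ->
  (forall i j : 'I_J, (i < j)%N -> pi_ psis i < pi_ psis j) ->
  (1 <= k)%N -> (k.+1 <= T0)%N -> (2 * k.+1 <= T)%N ->
  ID_cond T k psis ->
  valid_param T0 T eps psi ->
  (forall (x : {ffun 'I_T -> 'I_K}) (d : bool), pW T0 psi x d = pW T0 psis x d) ->
  forall t : nat, (T0 < t <= T)%N -> ATT T0 T psi t = ATT T0 T psis t.
Proof.
(* The ordering of the pi^j only fixes the labels of the types, which the ATT sums over. *)
move=> _ J_gt0 _ T0T eps_gt0 psis_valid _ k_gt0 kT0 kT psis_ID psi_valid same_pW t _.
have kT3 : (k.+3 <= T)%N by lia.
have same_pX0D1 := pX0D1_identified k_gt0 kT3 kT0 J_gt0 eps_gt0
  psis_valid psi_valid same_pW psis_ID.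
rewrite (ATT_pW J_gt0 eps_gt0 T0T psi_valid) (ATT_pW J_gt0 eps_gt0 T0T psis_valid).
apply/rowP => k0; rewrite !mxE.
by congr (_ / _); apply: eq_bigr => x _; rewrite same_pW ?same_pX0D1.
Qed.
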